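(* Let $S$ be a numerical semigroup, $D=S^*+S^*$, and $G=G(S)=(V,E)$. Among the vertices in $V\cap D$, every one of maximal length is nonloopy, i.e. if $u\in V\cap D$ has $\mathrm{len}(u)\ge \mathrm{len}(u')$ for all $u'\in V\cap D$, then $2u\notin X$.
   Context: A numerical semigroup is a subset $S\subseteq\mathbb N$ containing $0$, closed under addition, with finite complement; $S^*=S\setminus\{0\}$, $m=\min S^*$, $X=\{s\in S^*: s-m\notin S\}$. The graph $G(S)$ has edge set all subsets $\{x,y\}\subseteq X$ ($x=y$ allowed) with $x+y\in X$, and vertex set $V$ the endvertices of these edges; a vertex $x$ is loopy if $\{x,x\}$ is an edge, i.e. $2x\in X$. For $z\in S^*$, $\mathrm{len}(z)$ is the largest integer $t\ge1$ such that $z=x_1+\dots+x_t$ with all $x_i\in S^*$. *)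

From mathcomp Require Import all_boot.
Set Implicit Arguments. Unset Strict Implicit. Unset Printing Implicit Defensive.

Definition numerical_semigroup (S : nat -> Prop) : Prop :=
  [/\ S 0, (forall x y, S x -> S y -> S (x + y)) &
      exists N, forall n, N <= n -> S n].

Definition Sstar (S : nat -> Prop) (x : nat) : Prop := S x /\ 0 < x.

Definition is_multiplicity (S : nat -> Prop) (m : nat) : Prop :=
  Sstar S m /\ forall s, Sstar S s -> m <= s.

(* X = { s in S^* : s - m not in S } (integer subtraction: if s < m then s-m ∉ S) *)
Definition Xset (S : nat -> Prop) (m : nat) (s : nat) : Prop :=
  Sstar S s /\ ~ (m <= s /\ S (s - m)).

(* Vertex set of G(S): endpoints of edges {x,y} ⊆ X with x + y ∈ X (x = y allowed). *)
Definition Vset (S : nat -> Prop) (m : nat) (x : nat) : Prop :=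
  Xset S m x /\ exists y, Xset S m y /\ Xset S m (x + y).

Definition Dset (S : nat -> Prop) (z : nat) : Prop :=
  exists a b, Sstar S a /\ Sstar S b /\ z = a + b.

Definition decomposable (S : nat -> Prop) (z t : nat) : Prop :=
  exists s : seq nat, size s = t /\ (forall x, x \in s -> Sstar S x) /\ sumn s = z.

Definition is_len (S : nat -> Prop) (z t : nat) : Prop :=
  1 <= t /\ decomposable S z t /\ forall t', 1 <= t' -> decomposable S z t' -> t' <= t.

From Stdlib Require Import Classical.
From mathcomp Require Import all_boot zify.

Set Implicit Arguments.
Unset Strict Implicit.
Unset Printing Implicit Defensive.

(* X is closed under taking summands from S: if x - m were in S, then so would
   be (x + y) - m = (x - m) + y.  Hence, if 2u is in X for u = a + b with
   a, b in S^*, the splitting 2u = (a + u) + b shows that a + u and b lie in X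
   and that {a + u, b} is an edge.  So a + u is a vertex in D, and prepending a
   to a longest decomposition of u shows len (a + u) > len u, contradicting the
   maximality of u. *)

Lemma bounded_has_max (P : nat -> Prop) (B t0 : nat) :
  (forall t, P t -> t <= B) -> P t0 ->
  exists t, P t /\ forall t', P t' -> t' <= t.
Proof.
move=> PB Pt0; have [n Bt0] : exists n, B - t0 <= n by exists (B - t0).
elim: n t0 Pt0 Bt0 => [|n IH] t0 Pt0 Bt0.
  by exists t0; split=> // t' /PB; lia.
have [[t' [Pt' lt_t0t']]|no_larger] := classic (exists t', P t' /\ t0 < t').
  by apply: (IH t') => //; have := PB _ Pt'; lia.
exists t0; split=> // t' Pt'; rewrite leqNgt; apply/negP => lt_t0t'.
by apply: no_larger; exists t'.
Qed.

Section Decompositions.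

Variable S : nat -> Prop.

Lemma size_le_sumn_Sstar (s : seq nat) :
  (forall x, x \in s -> Sstar S x) -> size s <= sumn s.
Proof.
elim: s => [|x s IH] //= Ss.
have [_ x_gt0] := Ss x (mem_head _ _).
have : size s <= sumn s by apply: IH => y ys; apply: Ss; rewrite inE ys orbT.
lia.
Qed.

Lemma decomposable_le (z t : nat) : decomposable S z t -> t <= z.
Proof. by move=> [s [<- [Ss <-]]]; exact: size_le_sumn_Sstar. Qed.

Lemma decomposable_cons (a z t : nat) :
  Sstar S a -> decomposable S z t -> decomposable S (a + z) t.+1.
Proof.
move=> Sa [s [size_s [Ss sum_s]]]; exists (a :: s); split; first by rewrite /= size_s.
split; last by rewrite /= sum_s.
by move=> x; rewrite inE => /predU1P [->|/Ss].
Qed.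

Lemma is_len_exists (z : nat) : Sstar S z -> exists t, is_len S z t.
Proof.
move=> Sz.
have dec1 : decomposable S z 1.
  exists [:: z]; split=> //; split; last by rewrite /= addn0.
  by move=> x; rewrite inE => /eqP ->.
have [|t [[t_gt0 dec_t] t_max]] :=
  @bounded_has_max (fun t => 1 <= t /\ decomposable S z t) z 1 _ (conj isT dec1).
  by move=> t [_ /decomposable_le].
by exists t; split=> //; split=> // t' t'_gt0 dec_t'; exact: t_max.
Qed.

Lemma is_len_addl_lt (a z t t' : nat) :
  Sstar S a -> is_len S z t -> is_len S (a + z) t' -> t < t'.
Proof.
move=> Sa [_ [dec_z _]] [_ [_ max_t']].
exact: (max_t' t.+1 isT (decomposable_cons Sa dec_z)).
Qed.

End Decompositions.

Section AperySet.

Variables (S : nat -> Prop) (m : nat).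
Hypothesis S_add : forall x y, S x -> S y -> S (x + y).

Lemma Xset_addl (x y : nat) : Sstar S x -> S y -> Xset S m (x + y) -> Xset S m x.
Proof.
move=> Sx Sy [_ notX]; split=> // -[le_mx Sxm]; apply: notX; split; first lia.
by rewrite addnC -addnBA // addnC; exact: S_add.
Qed.

Lemma Xset_addr (x y : nat) : S x -> Sstar S y -> Xset S m (x + y) -> Xset S m y.
Proof. by move=> Sx Sy; rewrite addnC; exact: Xset_addl. Qed.

End AperySet.

Theorem proposition4p10 (S : nat -> Prop) (m u : nat) :
  numerical_semigroup S ->
  is_multiplicity S m ->
  Vset S m u -> Dset S u ->
  (forall u' t t', Vset S m u' -> Dset S u' ->
     is_len S u t -> is_len S u' t' -> t' <= t) ->
  ~ Xset S m (2 * u).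
Proof.
move=> [_ S_add _] _ [[[Su u_gt0] _] _] [a [b [Sa [Sb def_u]]]] u_max X2u.
have split2u : 2 * u = (a + u) + b by lia.
have Sau : Sstar S (a + u) by case: Sa => Sa a_gt0; split; [exact: S_add | lia].
have Xau : Xset S m (a + u).
  by apply: (Xset_addl S_add Sau (proj1 Sb)); rewrite -split2u.
have Xb : Xset S m b.
  by apply: (Xset_addr S_add (proj1 Sau) Sb); rewrite -split2u.
have Vau : Vset S m (a + u) by split=> //; exists b; rewrite -split2u.
have Dau : Dset S (a + u) by exists a, u.
have [t len_u] := is_len_exists (conj Su u_gt0 : Sstar S u).
have [t' len_au] := is_len_exists Sau.
have := u_max _ _ _ Vau Dau len_u len_au.
by rewrite leqNgt (is_len_addl_lt Sa len_u len_au).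
Qed.
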